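(* Let $T$ be a rooted tree whose leaves are the keys $[n]=\{1,\dots,n\}$, and for each node $v$ of $T$ let $R_v$ be the set of leaves in the subtree of $v$. Let $p=(p_1,\dots,p_n)\in[0,1]^n$ with $\sum_i p_i$ an integer. Let $S$ be the random output of the hierarchy summarization procedure applied to $T$ and $p$. Then the distribution of $S$ is VarOpt for $p$, and for every node $v$ of $T$, with probability one, $|S\cap R_v|\in\{\lfloor p(R_v)\rfloor,\lceil p(R_v)\rceil\}$, where $p(R)=\sum_{i\in R}p_i$. In particular the maximum range discrepancy over the ranges $\{R_v\}$ is less than $1$.
   Context: Pair-Aggregate$(p,i,j)$, for indices $i\ne j$ with $0<p_i,p_j<1$, modifies only entries $i,j$ of the current vector $p$: if $p_i+p_j<1$, then with probability $p_i/(p_i+p_j)$ set $(p_i,p_j)\leftarrow(p_i+p_j,0)$ and otherwise set $(p_i,p_j)\leftarrow(0,p_i+p_j)$; if $p_i+p_j\ge 1$, then with probability $(1-p_j)/(2-p_i-p_j)$ set $(p_i,p_j)\leftarrow(1,p_i+p_j-1)$ and otherwise set $(p_i,p_j)\leftarrow(p_i+p_j-1,1)$ (independent fresh randomness each call). The hierarchy summarization procedure: starting from the vector $p$, as long as there are at least two indices whose current value lies in $(0,1)$, choose a pair $i\ne j$ of such indices whose lowest common ancestor $\mathrm{LCA}(i,j)$ in $T$ is lowest, i.e. there is no other pair of indices with current values in $(0,1)$ whose LCA is a proper descendant of $\mathrm{LCA}(i,j)$ (ties broken arbitrarily), and apply Pair-Aggregate to it; at termination output $S=\{i: p_i=1\}$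 for the final vector. A distribution over subsets $S\subseteq[n]$ is VarOpt for $p$ if $\Pr[i\in S]=p_i$ for all $i$, $|S|=\sum_ip_i$ with probability one, and for every $J\subseteq[n]$, $\Pr[J\subseteq S]\le\prod_{i\in J}p_i$ and $\Pr[J\cap S=\emptyset]\le\prod_{i\in J}(1-p_i)$. The maximum range discrepancy over a family of ranges $\mathcal{R}$ is $\max_{S}\max_{R\in\mathcal{R}}\big||S\cap R|-p(R)\big|$ over $S$ in the support. *)

From HB Require Import structures.
From mathcomp Require Import all_boot all_order all_algebra.
From mathcomp Require Import reals.
From Stdlib Require List.
Set Implicit Arguments. Unset Strict Implicit. Unset Printing Implicit Defensive.
Import Order.TTheory GRing.Theory Num.Theory.
Local Open Scope ring_scope.

Inductive tree (n : nat) : Type :=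
| Leaf of 'I_n
| Node of seq (tree n).
Arguments Leaf {n}.
Arguments Node {n}.

Fixpoint leaves {n} (t : tree n) : seq 'I_n :=
  match t with
  | Leaf i => [:: i]
  | Node ts => flatten (map leaves ts)
  end.

Fixpoint nodes {n} (t : tree n) : seq (tree n) :=
  t :: match t with
       | Leaf _ => [::]
       | Node ts => flatten (map nodes ts)
       end.

(* every internal node has at least one child (so leaves are exactly keys) *)
Fixpoint no_empty_node {n} (t : tree n) : Prop :=
  match t with
  | Leaf _ => True
  | Node ts => ts <> [::] /\ (fix all_ok (l : seq (tree n)) : Prop :=
                 match l with [::] => True | u :: l' => no_empty_node u /\ all_ok l' end) ts
  end.

Definition keyed_tree {n} (T : tree n) : Prop :=
  no_empty_node T /\ perm_eq (leaves T) (enum 'I_n).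

Definition range_of {n} (v : tree n) : {set 'I_n} := [set i | i \in leaves v].

Definition descendant {n} (u v : tree n) : Prop := List.In u (nodes v).
Definition proper_descendant {n} (u v : tree n) : Prop := descendant u v /\ u <> v.

Definition is_lca {n} (T : tree n) (i j : 'I_n) (u : tree n) : Prop :=
  descendant u T /\ i \in leaves u /\ j \in leaves u /\
  forall w, proper_descendant w u -> ~ (i \in leaves w /\ j \in leaves w).

Section Procedure.
Variable R : realType.
Variable n : nat.
Variable T : tree n.

Definition fractional (p : 'I_n -> R) (i : 'I_n) : Prop := 0 < p i < 1.

Definition upd (p : 'I_n -> R) (i j : 'I_n) (a b : R) : 'I_n -> R :=
  fun k => if k == i then a else if k == j then b else p k.

(* Pair-Aggregate(p,i,j): (q, p1, p2) meaning p1 with probability q and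
   p2 with probability 1 - q. *)
Definition pair_aggregate (p : 'I_n -> R) (i j : 'I_n) : R * ('I_n -> R) * ('I_n -> R) :=
  let s := p i + p j in
  if s < 1 then (p i / s, upd p i j s 0, upd p i j 0 s)
  else ((1 - p j) / (2 - s), upd p i j 1 (s - 1), upd p i j (s - 1) 1).

Definition lowest_pair (p : 'I_n -> R) (i j : 'I_n) : Prop :=
  i != j /\ fractional p i /\ fractional p j /\
  exists u, is_lca T i j u /\
    forall a b w, a != b -> fractional p a -> fractional p b ->
      is_lca T a b w -> ~ proper_descendant w u.

Definition dirac (S0 : {set 'I_n}) : {set 'I_n} -> R :=
  fun S => if S == S0 then 1 else 0.
Definition mix (q : R) (D1 D2 : {set 'I_n} -> R) : {set 'I_n} -> R :=
  fun S => q * D1 S + (1 - q) * D2 S.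

(* outcome p D : D is the distribution of the output S of the hierarchy
   summarization procedure started from the vector p, for some resolution of
   the (arbitrary) tie-breaking. *)
Inductive outcome : ('I_n -> R) -> ({set 'I_n} -> R) -> Prop :=
| outcome_stop p :
    (forall i j, i != j -> fractional p i -> fractional p j -> False) ->
    outcome p (dirac [set i | p i == 1])
| outcome_step p i j D1 D2 :
    lowest_pair p i j ->
    outcome (pair_aggregate p i j).1.2 D1 ->
    outcome (pair_aggregate p i j).2 D2 ->
    outcome p (mix (pair_aggregate p i j).1.1 D1 D2).

End Procedure.

Definition Pr {R : realType} {n} (D : {set 'I_n} -> R) (E : pred {set 'I_n}) : R :=
  \sum_(S | E S) D S.

Definition is_distribution {R : realType} {n} (D : {set 'I_n} -> R) : Prop :=
  (forall S, 0 <= D S) /\ \sum_S D S = 1.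

Definition pmass {R : realType} {n} (p : 'I_n -> R) (A : {set 'I_n}) : R :=
  \sum_(i in A) p i.

Definition VarOpt {R : realType} {n} (p : 'I_n -> R) (D : {set 'I_n} -> R) : Prop :=
  is_distribution D /\
  (forall i, Pr D (fun S => i \in S) = p i) /\
  (forall S, 0 < D S -> (#|S|%:R : R) = \sum_i p i) /\
  (forall J : {set 'I_n}, Pr D (fun S => J \subset S) <= \prod_(i in J) p i) /\
  (forall J : {set 'I_n}, Pr D (fun S => [disjoint J & S]) <= \prod_(i in J) (1 - p i)).

Definition max_range_discrepancy {R : realType} {n} (T : tree n)
    (p : 'I_n -> R) (D : {set 'I_n} -> R) : R :=
  \big[Num.max/0]_(S | 0 < D S)
    \big[Num.max/0]_(v <- nodes T) `|(#|S :&: range_of v|%:R : R) - pmass p (range_of v)|.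

From mathcomp Require Import all_boot all_order all_algebra.
From mathcomp Require Import reals lra zify.
From Stdlib Require Import Classical.
Import Order.TTheory GRing.Theory Num.Theory.
Set Implicit Arguments. Unset Strict Implicit. Unset Printing Implicit Defensive.
Local Open Scope ring_scope.

(* Every Pair-Aggregate step keeps each marginal as a martingale and its two
   outcomes are negatively correlated on the aggregated pair, which gives
   VarOpt by induction along the run.  For a node v, the mass p(R_v) is
   unchanged as long as no aggregated pair straddles R_v.  When the first
   straddling pair (i, j) with i in R_v is aggregated, i is the only
   fractional key of R_v: two fractional keys of R_v would have their LCA
   below v, hence strictly below LCA(i, j), contradicting the choice of a
   lowest pair.  From then on R_v holds at most one fractional key, and its
   number of ones is at least floor p(R_v) while ones plus fractional keys is
   at most ceil p(R_v). *)

Section Trees.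
Variable n : nat.
Implicit Types (T t u v w : tree n) (ts : seq (tree n)).

Definition tree_ind_In (P : tree n -> Prop)
  (HL : forall i, P (Leaf i))
  (HN : forall ts, (forall t, List.In t ts -> P t) -> P (Node ts)) :
  forall t, P t :=
  fix F t := match t with
  | Leaf i => HL i
  | Node ts => HN ts ((fix G (l : seq (tree n)) : forall t, List.In t l -> P t :=
        match l with
        | [::] => fun t (H : List.In t [::]) => match H with end
        | u :: l' => fun t H => match H with
                     | or_introl E => eq_ind u P (F u) t E
                     | or_intror H' => G l' t H'
                     end
        end) ts)
  end.

Lemma In_flatten_map (A B : Type) (f : A -> seq B) (s : seq A) (x : B) :
  List.In x (flatten (map f s)) <-> exists a, List.In a s /\ List.In x (f a).
Proof.
have In_cat (l1 l2 : seq B) : List.In x (l1 ++ l2) <-> List.In x l1 \/ List.In x l2.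
  by elim: l1 => [|b l1 IH] /=; [tauto | rewrite IH; tauto].
elim: s => [|a s IH] /=; first by split=> // -[a []].
rewrite In_cat IH; split.
- by case=> [Hx|[b [Hb Hx]]]; [exists a | exists b]; auto.
- by case=> b [[<-|Hb] Hx]; [left | right; exists b].
Qed.

Lemma descendant_refl v : descendant v v.
Proof. by case: v => [i|ts]; left. Qed.

Lemma descendant_Leaf u i : descendant u (Leaf i) -> u = Leaf i.
Proof. by case=> [<-|[]]. Qed.

Lemma descendant_Node u ts : descendant u (Node ts) ->
  u = Node ts \/ exists t, List.In t ts /\ descendant u t.
Proof. by case=> [<-|/In_flatten_map]; [left | right]. Qed.

Lemma descendant_child u t ts : List.In t ts -> descendant u t -> descendant u (Node ts).
Proof. by move=> Ht Hu; right; apply/In_flatten_map; exists t. Qed.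

Lemma descendant_trans u v w : descendant u v -> descendant v w -> descendant u w.
Proof.
move=> Huv; elim/tree_ind_In: w => [i /descendant_Leaf <- //|ts IH].
case/descendant_Node => [<- //|[t [Ht Hvt]]].
exact: descendant_child Ht (IH t Ht Hvt).
Qed.

Lemma leaves_child t ts : List.In t ts -> {subset leaves t <= leaves (Node ts)}.
Proof.
move=> Ht i Hi; elim: ts Ht => //= s ts IH [->|/IH Hts]; rewrite mem_cat ?Hi //.
by rewrite Hts orbT.
Qed.

Lemma descendant_leaves u v : descendant u v -> {subset leaves u <= leaves v}.
Proof.
elim/tree_ind_In: v => [i /descendant_Leaf -> //|ts IH].
case/descendant_Node => [-> //|[t [Ht Hut]] k Hk].
exact: leaves_child Ht _ (IH t Ht Hut k Hk).
Qed.

Lemma size_nodes_child t ts : List.In t ts -> (size (nodes t) < size (nodes (Node ts)))%N.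
Proof.
move=> Ht; rewrite /= ltnS.
elim: ts Ht => //= s ts IH [->|/IH Hts]; rewrite size_cat ?leq_addr //.
exact: leq_trans Hts (leq_addl _ _).
Qed.

Lemma descendant_size u v : descendant u v -> u = v \/ (size (nodes u) < size (nodes v))%N.
Proof.
elim/tree_ind_In: v => [i /descendant_Leaf|ts IH]; first by left.
case/descendant_Node => [|[t [Ht /(IH t Ht) [->|Hlt]]]]; [by left | right..].
  exact: size_nodes_child.
exact: ltn_trans Hlt (size_nodes_child Ht).
Qed.

Lemma minimal_descendant (Q : tree n -> Prop) v : Q v ->
  exists u, [/\ descendant u v, Q u & forall w, proper_descendant w u -> ~ Q w].
Proof.
have [N] := ubnP (size (nodes v)); elim: N v => // N IH v Hv Qv.
have [[w [[Hwv Hwv'] Qw]]|Hmin] := classic (exists w, proper_descendant w v /\ Q w).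
  have Hw : (size (nodes w) < N)%N.
    by case: (descendant_size Hwv) => // Hlt; exact: leq_trans Hlt Hv.
  have [u [Huw Qu Hu]] := IH w Hw Qw.
  by exists u; split=> //; exact: descendant_trans Huw Hwv.
exists v; split=> // [|w Hw Qw]; first exact: descendant_refl.
by apply: Hmin; exists w.
Qed.

Lemma uniq_leaves_child t ts : uniq (leaves (Node ts)) -> List.In t ts -> uniq (leaves t).
Proof.
elim: ts => //= s ts IH; rewrite cat_uniq => /and3P [Us _ Uts] [<- //|]; exact: IH.
Qed.

Lemma leaves_children_disjoint t t' ts i : uniq (leaves (Node ts)) ->
  List.In t ts -> List.In t' ts -> t <> t' -> i \in leaves t -> i \in leaves t' -> False.
Proof.
elim: ts => //= s ts IH; rewrite cat_uniq => /and3P [_ Hdis Uts].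
have Hout k u : List.In u ts -> k \in leaves u -> k \notin leaves s.
  by move=> Hu Hk; apply: (hasPn Hdis); exact: leaves_child Hu _ Hk.
move=> [<-|Ht] [<-|Ht'] Hne Hi Hi' //.
- by move: (Hout i t' Ht' Hi'); rewrite Hi.
- by move: (Hout i t Ht Hi); rewrite Hi'.
- exact: IH Uts Ht Ht' Hne Hi Hi'.
Qed.

Lemma descendant_total v u w i : uniq (leaves v) ->
  descendant u v -> descendant w v -> i \in leaves u -> i \in leaves w ->
  descendant u w \/ descendant w u.
Proof.
elim/tree_ind_In: v u w => [j|ts IH] u w Hv Hu Hw Hi Hi'.
  by rewrite (descendant_Leaf Hu) (descendant_Leaf Hw); left; exact: descendant_refl.
case/descendant_Node: Hu => [->|[t [Ht Hut]]]; first by right.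
case/descendant_Node: Hw => [->|[t' [Ht' Hwt']]]; first by left; exact: descendant_child Ht Hut.
have [Ett'|Hne] := classic (t = t').
  by rewrite -Ett' in Hwt'; exact: IH t Ht u w (uniq_leaves_child Hv Ht) Hut Hwt' Hi Hi'.
case: (leaves_children_disjoint Hv Ht Ht' Hne (descendant_leaves Hut Hi) (descendant_leaves Hwt' Hi')).
Qed.

Lemma is_lca_exists T i j : i \in leaves T -> j \in leaves T -> exists w, is_lca T i j w.
Proof.
move=> Hi Hj.
have [w [HwT [Hiw Hjw] Hmin]] :=
  minimal_descendant (Q := fun w => i \in leaves w /\ j \in leaves w) (conj Hi Hj).
by exists w.
Qed.

Lemma is_lca_sym T i j w : is_lca T i j w -> is_lca T j i w.
Proof. by case=> HwT [Hi [Hj Hmin]]; split=> //; split=> //; split=> // u /Hmin; tauto. Qed.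

Lemma is_lca_descendant T a b w v : uniq (leaves T) -> is_lca T a b w ->
  descendant v T -> a \in leaves v -> b \in leaves v -> descendant w v.
Proof.
move=> HT [HwT [Haw [Hbw Hmin]]] HvT Hav Hbv.
have [//|Hvw] := descendant_total HT HwT HvT Haw Hav.
have [<-|Hne] := classic (v = w); first exact: descendant_refl.
by exfalso; apply: (Hmin v).
Qed.

Lemma keyed_tree_mem T i : keyed_tree T -> i \in leaves T.
Proof. by case=> _ /perm_mem ->; rewrite mem_enum. Qed.

Lemma keyed_tree_uniq T : keyed_tree T -> uniq (leaves T).
Proof. by case=> _ /perm_uniq ->; exact: enum_uniq. Qed.

End Trees.

Section PairAggregate.
Variables (R : realType) (n : nat).
Implicit Types (p : 'I_n -> R) (A J : {set 'I_n}).

Record aggregate_spec (x y q a1 b1 a2 b2 : R) : Prop := AggregateSpec {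
  aggregate_prob : 0 < q < 1;
  aggregate_mass1 : a1 + b1 = x + y;
  aggregate_mass2 : a2 + b2 = x + y;
  aggregate_mean1 : q * a1 + (1 - q) * a2 = x;
  aggregate_mean2 : q * b1 + (1 - q) * b2 = y;
  aggregate_a1 : 0 <= a1 <= 1;
  aggregate_b1 : 0 <= b1 <= 1;
  aggregate_a2 : 0 <= a2 <= 1;
  aggregate_b2 : 0 <= b2 <= 1;
  aggregate_settled1 : ~~ (0 < a1 < 1) || ~~ (0 < b1 < 1);
  aggregate_settled2 : ~~ (0 < a2 < 1) || ~~ (0 < b2 < 1);
  aggregate_joint_in : q * (a1 * b1) + (1 - q) * (a2 * b2) <= x * y;
  aggregate_joint_out :
    q * ((1 - a1) * (1 - b1)) + (1 - q) * ((1 - a2) * (1 - b2)) <= (1 - x) * (1 - y) }.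

Lemma pair_aggregate_spec p i j : fractional p i -> fractional p j ->
  exists q a1 b1 a2 b2,
    pair_aggregate p i j = (q, upd p i j a1 b1, upd p i j a2 b2) /\
    aggregate_spec (p i) (p j) q a1 b1 a2 b2.
Proof.
rewrite /fractional /pair_aggregate /= => /andP [xi0 xi1] /andP [xj0 xj1].
case: ltrP => Hs.
- have Hq : p i / (p i + p j) * (p i + p j) = p i by rewrite divfK // gt_eqF //; lra.
  have Hq0 : 0 < p i / (p i + p j) by rewrite divr_gt0 //; lra.
  have Hq1 : p i / (p i + p j) < 1 by rewrite ltr_pdivrMr; lra.
  exists (p i / (p i + p j)), (p i + p j), 0, 0, (p i + p j); split=> //.
  move: (p i / _) Hq Hq0 Hq1 => q Hq Hq0 Hq1.
  by constructor; rewrite ?ltxx ?orbT //; nra.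
- have Hq : (1 - p j) / (2 - (p i + p j)) * (2 - (p i + p j)) = 1 - p j.
    by rewrite divfK // gt_eqF //; lra.
  have Hq0 : 0 < (1 - p j) / (2 - (p i + p j)) by rewrite divr_gt0 //; lra.
  have Hq1 : (1 - p j) / (2 - (p i + p j)) < 1 by rewrite ltr_pdivrMr; lra.
  exists ((1 - p j) / (2 - (p i + p j))), 1, (p i + p j - 1), (p i + p j - 1), 1; split=> //.
  move: (_ / _) Hq Hq0 Hq1 => q Hq Hq0 Hq1.
  by constructor; rewrite ?ltxx ?andbF ?orbT //; nra.
Qed.

Lemma upd_l p i j a b : upd p i j a b i = a.
Proof. by rewrite /upd eqxx. Qed.

Lemma upd_r p i j a b : i != j -> upd p i j a b j = b.
Proof. by rewrite /upd eq_sym => /negbTE ->; rewrite eqxx. Qed.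

Lemma upd_other p i j a b k : k != i -> k != j -> upd p i j a b k = p k.
Proof. by rewrite /upd => /negbTE -> /negbTE ->. Qed.

Lemma upd_swap p i j a b : i != j -> upd p i j a b =1 upd p j i b a.
Proof.
move=> Hij k; case: (eqVneq k i) => [->|Hki]; first by rewrite upd_l upd_r // eq_sym.
case: (eqVneq k j) => [->|Hkj]; first by rewrite upd_l upd_r.
by rewrite !upd_other.
Qed.

Lemma big_pair_split (V : Type) (idx : V) (op : Monoid.com_law idx) A i j (F : 'I_n -> V) :
  i != j ->
  \big[op/idx]_(k in A) F k =
  op (op (\big[op/idx]_(k in A | (k != i) && (k != j)) F k) (if i \in A then F i else idx))
     (if j \in A then F j else idx).
Proof.
move=> Hij.
have big_in1 m : \big[op/idx]_(k in A | k == m) F k = if m \in A then F m else idx.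
  case: ifP => Hm; first by apply: big_pred1 => k /=; case: eqVneq => [->|]; rewrite ?Hm ?andbF.
  by rewrite big_pred0 // => k /=; case: eqVneq => [->|]; rewrite ?Hm ?andbF.
rewrite (bigID (fun k => k == i)) /= big_in1 (bigID (fun k => k == j)) /=.
have -> : \big[op/idx]_(k | (k \in A) && (k != i) && (k == j)) F k = if j \in A then F j else idx.
  rewrite -big_in1; apply: eq_bigl => k.
  by case: (eqVneq k j) => [->|]; rewrite ?andbF // eq_sym Hij !andbT.
rewrite (eq_bigl (fun k => (k \in A) && ((k != i) && (k != j)))); last first.
  by move=> k; rewrite andbA.
set X := (if i \in A then _ else _); set Y := (if j \in A then _ else _).
set Z := \big[op/idx]_(k in A | _) F k.
by rewrite (Monoid.mulmC op Z X) -Monoid.mulmA (Monoid.mulmC op Y Z).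
Qed.

Lemma sum_upd p i j a b A : i != j ->
  \sum_(k in A) upd p i j a b k =
  \sum_(k in A) p k + (if i \in A then a - p i else 0) + (if j \in A then b - p j else 0).
Proof.
move=> Hij; rewrite (big_pair_split _ _ _ Hij) [in RHS](big_pair_split _ _ _ Hij) /=.
rewrite (eq_bigr p); last by move=> k /andP [_ /andP [Hi Hj]]; rewrite upd_other.
rewrite upd_l upd_r //.
by case: (i \in A); case: (j \in A); rewrite ?addr0 //; lra.
Qed.

Lemma sum_upd_total p i j a b : i != j -> a + b = p i + p j ->
  \sum_k upd p i j a b k = \sum_k p k.
Proof.
move=> Hij Hab; have := sum_upd p a b [set: 'I_n] Hij.
have Efull (F : 'I_n -> R) : \sum_(k in [set: 'I_n]) F k = \sum_k F k.
  by apply: eq_bigl => k; rewrite in_setT.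
by rewrite !Efull !in_setT => ->; lra.
Qed.

Lemma prod_upd_mix_le (g : R -> R) p i j q a1 b1 a2 b2 J :
  i != j -> 0 < q < 1 -> (forall k, 0 <= g (p k)) ->
  q * g a1 + (1 - q) * g a2 = g (p i) -> q * g b1 + (1 - q) * g b2 = g (p j) ->
  q * (g a1 * g b1) + (1 - q) * (g a2 * g b2) <= g (p i) * g (p j) ->
  q * \prod_(k in J) g (upd p i j a1 b1 k) + (1 - q) * \prod_(k in J) g (upd p i j a2 b2 k)
    <= \prod_(k in J) g (p k).
Proof.
move=> Hij /andP [Hq0 Hq1] Hg Mi Mj Mij.
rewrite !(big_pair_split _ _ _ Hij) /= !upd_l !upd_r //.
have Eout a b : \prod_(k in J | (k != i) && (k != j)) g (upd p i j a b k) =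
                \prod_(k in J | (k != i) && (k != j)) g (p k).
  by apply: eq_bigr => k /andP [_ /andP [Hi Hj]]; rewrite upd_other.
rewrite !Eout; set Z := \prod_(k in J | _) _.
have HZ : 0 <= Z by apply: prodr_ge0.
case: (i \in J); case: (j \in J); rewrite ?mulr1.
- by have := ler_wpM2l HZ Mij; nra.
- by rewrite -Mi; nra.
- by rewrite -Mj; nra.
- by nra.
Qed.

Definition unit_weights p := forall k, 0 <= p k <= 1.
Definition integral_total p := exists m : int, \sum_k p k = m%:~R.
Definition stopped p := forall i j, i != j -> fractional p i -> fractional p j -> False.
Definition fractional_keys p : {set 'I_n} := [set k | 0 < p k < 1].

Lemma unit_weights_upd p i j a b :
  unit_weights p -> 0 <= a <= 1 -> 0 <= b <= 1 -> unit_weights (upd p i j a b).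
Proof. by move=> Hp Ha Hb k; rewrite /upd; case: ifP => _ //; case: ifP. Qed.

Lemma integral_total_upd p i j a b :
  i != j -> a + b = p i + p j -> integral_total p -> integral_total (upd p i j a b).
Proof. by move=> Hij Hab [m Hm]; exists m; rewrite sum_upd_total. Qed.

Lemma card_fractional_keys_upd p i j a b : i != j ->
  fractional p i -> fractional p j -> ~~ (0 < a < 1) || ~~ (0 < b < 1) ->
  (#|fractional_keys (upd p i j a b)| < #|fractional_keys p|)%N.
Proof.
move=> Hij Hi Hj Hab.
have [m [Hm Hm']] : exists m, m \in fractional_keys p /\ ~~ (0 < upd p i j a b m < 1).
  by case/orP: Hab => H; [exists i | exists j]; rewrite inE ?upd_l ?upd_r.
rewrite (cardsD1 m (fractional_keys p)) Hm ltnS; apply: subset_leq_card; apply/subsetP => k.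
rewrite !inE; case: (eqVneq k m) => [->|_]; first by rewrite (negbTE Hm').
case: (eqVneq k i) => [-> _|Hki]; first exact: Hi.
case: (eqVneq k j) => [-> _|Hkj]; first exact: Hj.
by rewrite upd_other.
Qed.

Lemma unit_not_fractional (y : R) : 0 <= y <= 1 -> ~~ (0 < y < 1) -> y = 0 \/ y = 1.
Proof.
move=> /andP [H0 H1]; rewrite negb_and -!leNgt => /orP [H|H]; [left | right];
  apply/eqP; rewrite eq_le ?H ?H0 ?H1 //.
Qed.

Lemma stopped_binary p : unit_weights p -> integral_total p -> stopped p ->
  forall k, p k = 0 \/ p k = 1.
Proof.
move=> Hp [m Hm] Hst k; apply: NNPP => Hk.
have Hfk : fractional p k := contra_notT (unit_not_fractional (Hp k)) Hk.
have Hb l : l != k -> p l = (p l == 1)%:R.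
  move=> Hl; have [->|->] : p l = 0 \/ p l = 1; rewrite ?eqxx ?(eq_sym 0) ?oner_eq0 //.
  by apply: (unit_not_fractional (Hp l)); apply/negP => Hfl; exact: Hst l k Hl Hfl Hfk.
move: Hm; rewrite (bigD1 k) //= (eq_bigr _ (fun l => Hb l)) -natr_sum.
set c := (\sum_(l < n | l != k) _)%N => Hm.
have Epk : p k = (m - c%:Z)%:~R by rewrite intrB -Hm /=; lra.
by move: Hfk; rewrite /fractional Epk ltr0z ltrz1; lia.
Qed.

Lemma binary_indicator p : (forall k, p k = 0 \/ p k = 1) ->
  forall k, p k = (k \in [set i | p i == 1])%:R.
Proof. by move=> Hb k; rewrite inE; case: (Hb k) => ->; rewrite ?eqxx // eq_sym oner_eq0. Qed.

Lemma mix_support q (D1 D2 : {set 'I_n} -> R) S :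
  (forall S, 0 <= D1 S) -> (forall S, 0 <= D2 S) ->
  0 < mix q D1 D2 S -> 0 < D1 S \/ 0 < D2 S.
Proof.
move=> D1ge0 D2ge0; rewrite /mix.
case: (ltrP 0 (D1 S)) => [|D1le]; first by left.
case: (ltrP 0 (D2 S)) => [|D2le]; first by right.
have -> : D1 S = 0 by apply/eqP; rewrite eq_le D1le D1ge0.
have -> : D2 S = 0 by apply/eqP; rewrite eq_le D2le D2ge0.
by rewrite !mulr0 addr0 ltxx.
Qed.

Lemma Pr_mix q (D1 D2 : {set 'I_n} -> R) E :
  Pr (mix q D1 D2) E = q * Pr D1 E + (1 - q) * Pr D2 E.
Proof. by rewrite /Pr /mix big_split /= -!mulr_sumr. Qed.

Lemma Pr_dirac (S0 : {set 'I_n}) (E : pred {set 'I_n}) :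
  Pr (dirac R S0) E = (E S0)%:R.
Proof.
rewrite /Pr; case HE: (E S0).
  by rewrite (bigD1 S0) //= big1 ?addr0 /dirac ?eqxx // => S /andP [_ /negbTE ->].
by rewrite big1 // => S HS; rewrite /dirac; case: eqVneq => // E'; rewrite -E' HS in HE.
Qed.

End PairAggregate.

Section RangeCounts.
Variables (R : realType) (n : nat).
Implicit Types (p : 'I_n -> R) (A : {set 'I_n}) (x : R).

Definition count_ones A p := #|[set k in A | p k == 1]|.
Definition count_fractional A p := #|[set k in A | 0 < p k < 1]|.

(* The state of a range once an aggregated pair has straddled it. *)
Definition rounding_bounds A x p :=
  [/\ (count_fractional A p <= 1)%N, Num.floor x <= (count_ones A p)%:Z
    & ((count_ones A p + count_fractional A p)%N)%:Z <= Num.ceil x].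

Definition range_invariant A x p := pmass p A = x \/ rounding_bounds A x p.

Lemma range_invariant_eq_on A x p p' :
  {in A, p' =1 p} -> range_invariant A x p -> range_invariant A x p'.
Proof.
move=> Epp'.
have Ecount (P : pred R) : #|[set k in A | P (p' k)]| = #|[set k in A | P (p k)]|.
  by apply: eq_card => k; rewrite !inE; case Hk: (k \in A); rewrite //= Epp'.
case=> [Hm|Hb]; [left | right]; last first.
  by rewrite /rounding_bounds /count_ones /count_fractional
    (Ecount (fun y => y == 1)) (Ecount (fun y => 0 < y < 1)).
by rewrite -Hm; apply: eq_bigr.
Qed.

Lemma card_update_one (P : pred R) p p' A m : m \in A ->
  (forall k, k \in A -> k != m -> p' k = p k) ->
  (#|[set k in A | P (p' k)]| + P (p m) = #|[set k in A | P (p k)]| + P (p' m))%N.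
Proof.
move=> Hm Hpp'.
rewrite (cardsD1 m [set k in A | P (p' k)]) (cardsD1 m [set k in A | P (p k)]) !inE Hm /=.
have -> : [set k in A | P (p' k)] :\ m = [set k in A | P (p k)] :\ m.
  apply/setP => k; rewrite !inE; case: (eqVneq k m) => //= Hkm.
  by case Hk: (k \in A); rewrite //= Hpp'.
by case: (P (p m)); case: (P (p' m)) => /=; lia.
Qed.

Lemma rounding_bounds_update A x p p' m : m \in A -> 0 < p m < 1 ->
  (forall k, k \in A -> k != m -> p' k = p k) -> 0 <= p' m <= 1 ->
  rounding_bounds A x p -> rounding_bounds A x p'.
Proof.
move=> Hm Hfm Hpp' Hp'm [F1 F2 F3].
have C1 := card_update_one (fun y => y == 1) Hm Hpp'.
have C2 := card_update_one (fun y => 0 < y < 1) Hm Hpp'.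
have Hpm1 : (p m == 1) = false by case/andP: Hfm => _; exact: lt_eqF.
rewrite /= Hpm1 Hfm in C1 C2.
rewrite /rounding_bounds -/(count_ones A p') -/(count_fractional A p')
  -/(count_ones A p) -/(count_fractional A p) in C1 C2 *.
have Hexcl : ~~ ((p' m == 1) && (0 < p' m < 1)).
  by apply/negP => /andP [/eqP ->]; rewrite ltxx andbF.
by move: Hexcl C1 C2; case: (p' m == 1); case: (0 < p' m < 1) => //= _ C1 C2; split; lia.
Qed.

Lemma pmass_binary A p : (forall k, k \in A -> p k = 0 \/ p k = 1) ->
  pmass p A = (count_ones A p)%:R.
Proof.
move=> Hb; rewrite /pmass /count_ones -sum1_card natr_sum big_mkcond [in RHS]big_mkcond /=.
apply: eq_bigr => k _; rewrite inE; case Hk: (k \in A) => //=.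
by case: (Hb k Hk) => ->; rewrite ?eqxx // eq_sym oner_eq0.
Qed.

Lemma rounding_bounds_single A p m : unit_weights p -> m \in A -> 0 < p m < 1 ->
  (forall a b, a != b -> a \in A -> b \in A -> 0 < p a < 1 -> 0 < p b < 1 -> False) ->
  rounding_bounds A (pmass p A) p.
Proof.
move=> Hp Hm Hfm Hno.
have Hfrac : [set k in A | 0 < p k < 1] = [set m].
  apply/setP => k; rewrite !inE; case: (eqVneq k m) => [->|Hkm]; first by rewrite Hm.
  by apply/negP => /andP [Hk Hfk]; apply: (Hno k m).
have Hones : [set k in A :\ m | p k == 1] = [set k in A | p k == 1].
  apply/setP => k; rewrite !inE; case: (eqVneq k m) => //= ->.
  by case/andP: Hfm => _ /lt_eqF ->; rewrite andbF.
have Hmass : pmass p A = (count_ones A p)%:R + p m.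
  rewrite /pmass (big_setD1 m Hm) addrC -/(pmass p (A :\ m)) pmass_binary ?/count_ones ?Hones //.
  move=> k; rewrite !inE => /andP [Hkm Hk]; apply: unit_not_fractional (Hp k) _.
  by apply/negP => Hfk; apply: (Hno k m).
case/andP: Hfm => Hm0 Hm1.
split; rewrite /count_fractional ?Hfrac ?cards1 //.
- by rewrite (@floor_def _ _ (count_ones A p)%:Z) // Hmass /= intrD /=; apply/andP; split; lra.
- rewrite (@ceil_def _ _ (count_ones A p + 1)%:Z) // Hmass PoszD intrD addrK /=.
  by apply/andP; split; lra.
Qed.

End RangeCounts.

Section Procedure.
Variables (R : realType) (n : nat) (T : tree n).
Hypothesis keyedT : keyed_tree T.
Implicit Types (p : 'I_n -> R) (D : {set 'I_n} -> R).

Lemma lowest_pair_sym p i j : lowest_pair T p i j -> lowest_pair T p j i.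
Proof.
case=> Hij [Hi [Hj [u [Hu Hmin]]]]; do !split=> //; first by rewrite eq_sym.
by exists u; split=> //; exact: is_lca_sym.
Qed.

Lemma lowest_pair_exists p a b : a != b -> fractional p a -> fractional p b ->
  exists i j, lowest_pair T p i j.
Proof.
move=> Hab Ha Hb.
have [w0 Hw0] := is_lca_exists (keyed_tree_mem a keyedT) (keyed_tree_mem b keyedT).
pose Q w := exists a b, [/\ a != b, fractional p a, fractional p b & is_lca T a b w].
have Qw0 : Q w0 by exists a, b.
have [u [_ [i [j [Hij Hi Hj Hu]]] Hmin]] := minimal_descendant Qw0.
exists i, j; do !split=> //; exists u; split=> // a' b' w Ha'b' Ha' Hb' Hw Hwu.
by apply: (Hmin w Hwu); exists a', b'.
Qed.

Lemma outcome_exists p : exists D, outcome T p D.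
Proof.
have [N] := ubnP #|fractional_keys p|; elim: N p => // N IH p HN.
have [[a [b [Hab Ha Hb]]]|Hstop] :=
  classic (exists a b, [/\ a != b, fractional p a & fractional p b]); last first.
  by eexists; apply: outcome_stop => i j Hij Hi Hj; apply: Hstop; exists i, j.
have [i [j Hl]] := lowest_pair_exists Hab Ha Hb.
have [Hij [Hi [Hj _]]] := Hl.
have [q [a1 [b1 [a2 [b2 [E Hspec]]]]]] := pair_aggregate_spec Hi Hj.
have Hnext a' b' : ~~ (0 < a' < 1) || ~~ (0 < b' < 1) -> exists D, outcome T (upd p i j a' b') D.
  move=> Hset; apply: IH; rewrite -ltnS.
  exact: leq_trans (card_fractional_keys_upd Hij Hi Hj Hset) HN.
have [D1 HD1] := Hnext _ _ (aggregate_settled1 Hspec).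
have [D2 HD2] := Hnext _ _ (aggregate_settled2 Hspec).
by eexists; apply: (outcome_step Hl); rewrite E; [exact: HD1 | exact: HD2].
Qed.

Lemma outcome_distribution p D : outcome T p D -> is_distribution D.
Proof.
elim=> {p D} [p _|p i j D1 D2 [_ [Hi [Hj _]]] _ [D1ge0 D1sum] _ [D2ge0 D2sum]].
  split=> [S|]; first by rewrite /dirac; case: ifP.
  by have := @Pr_dirac R _ [set i | p i == 1] predT; rewrite /Pr.
have [q [a1 [b1 [a2 [b2 [-> Hspec]]]]]] := pair_aggregate_spec Hi Hj.
have /andP [Hq0 Hq1] := aggregate_prob Hspec.
split=> [S|]; first by rewrite /mix /=; apply: addr_ge0; apply: mulr_ge0 => //; lra.
by rewrite /mix big_split /= -!mulr_sumr D1sum D2sum; lra.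
Qed.

Lemma outcome_admissible_ind (P : ('I_n -> R) -> ({set 'I_n} -> R) -> Prop) :
  (forall p, unit_weights p -> integral_total p -> stopped p ->
     P p (dirac R [set i | p i == 1])) ->
  (forall p i j q a1 b1 a2 b2 D1 D2, unit_weights p -> integral_total p ->
     lowest_pair T p i j -> aggregate_spec (p i) (p j) q a1 b1 a2 b2 ->
     outcome T (upd p i j a1 b1) D1 -> outcome T (upd p i j a2 b2) D2 ->
     P (upd p i j a1 b1) D1 -> P (upd p i j a2 b2) D2 -> P p (mix q D1 D2)) ->
  forall p D, outcome T p D -> unit_weights p -> integral_total p -> P p D.
Proof.
move=> Hstop Hstep p D; elim=> {p D} [p Hp|p i j D1 D2 Hl HD1 IH1 HD2 IH2] Hw Hint.
  exact: Hstop.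
have [Hij [Hi [Hj _]]] := Hl.
have [q [a1 [b1 [a2 [b2 [E Hspec]]]]]] := pair_aggregate_spec Hi Hj.
move: HD1 IH1 HD2 IH2; rewrite E /= => HD1 IH1 HD2 IH2.
apply: (Hstep p i j q a1 b1 a2 b2) => //.
- apply: IH1; first exact: unit_weights_upd Hw (aggregate_a1 Hspec) (aggregate_b1 Hspec).
  exact: integral_total_upd Hij (aggregate_mass1 Hspec) Hint.
- apply: IH2; first exact: unit_weights_upd Hw (aggregate_a2 Hspec) (aggregate_b2 Hspec).
  exact: integral_total_upd Hij (aggregate_mass2 Hspec) Hint.
Qed.

Lemma outcome_support (I : ('I_n -> R) -> Prop) (Q : {set 'I_n} -> Prop) :
  (forall p i j q a1 b1 a2 b2, unit_weights p -> lowest_pair T p i j ->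
     aggregate_spec (p i) (p j) q a1 b1 a2 b2 -> I p ->
     I (upd p i j a1 b1) /\ I (upd p i j a2 b2)) ->
  (forall p, unit_weights p -> integral_total p -> stopped p -> I p -> Q [set i | p i == 1]) ->
  forall p D, outcome T p D -> unit_weights p -> integral_total p -> I p ->
  forall S, 0 < D S -> Q S.
Proof.
move=> Hstep Hstop.
apply: (outcome_admissible_ind (P := fun p D => I p -> forall S, 0 < D S -> Q S)).
  move=> p Hw Hint Hst Ip S; rewrite /dirac; case: eqVneq => [-> _|_]; last by rewrite ltxx.
  exact: Hstop.
move=> p i j q a1 b1 a2 b2 D1 D2 Hw _ Hl Hspec HD1 HD2 IH1 IH2 Ip S.
have [I1 I2] := Hstep _ _ _ _ _ _ _ _ Hw Hl Hspec Ip.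
have [D1ge0 _] := outcome_distribution HD1; have [D2ge0 _] := outcome_distribution HD2.
by case/(mix_support D1ge0 D2ge0) => [/IH1|/IH2]; apply.
Qed.

Lemma outcome_marginal p D : outcome T p D -> unit_weights p -> integral_total p ->
  forall i, Pr D (fun S => i \in S) = p i.
Proof.
move: p D; apply: (outcome_admissible_ind (P := fun p D => forall i, Pr D (fun S => i \in S) = p i)).
  move=> p Hw Hint Hst i; rewrite Pr_dirac.
  exact/esym/(binary_indicator (stopped_binary Hw Hint Hst)).
move=> p i j q a1 b1 a2 b2 D1 D2 _ _ [Hij _] Hspec _ _ IH1 IH2 k; rewrite Pr_mix IH1 IH2.
case: (eqVneq k i) => [->|Hki]; first by rewrite !upd_l (aggregate_mean1 Hspec).
case: (eqVneq k j) => [->|Hkj]; first by rewrite !upd_r // (aggregate_mean2 Hspec).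
by rewrite !upd_other //; lra.
Qed.

Lemma outcome_card p D : outcome T p D -> unit_weights p -> integral_total p ->
  forall S, 0 < D S -> (#|S|%:R : R) = \sum_i p i.
Proof.
move=> HD Hw Hint; apply: (outcome_support (I := fun p' => \sum_i p' i = \sum_i p i)) HD Hw Hint _ => //.
  move=> p' i j q a1 b1 a2 b2 _ [Hij _] Hspec <-.
  by rewrite !sum_upd_total ?(aggregate_mass1 Hspec) ?(aggregate_mass2 Hspec).
move=> p' Hw' Hint' Hst <-.
rewrite (eq_bigr _ (fun k _ => binary_indicator (stopped_binary Hw' Hint' Hst) k)).
by rewrite -natr_sum -sum1_card big_mkcond.
Qed.

Lemma outcome_joint_in p D : outcome T p D -> unit_weights p -> integral_total p ->
  forall J : {set 'I_n}, Pr D (fun S => J \subset S) <= \prod_(i in J) p i.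
Proof.
move=> HD Hw Hint J; move: p D HD Hw Hint.
apply: (outcome_admissible_ind (P := fun p D => Pr D (fun S => J \subset S) <= \prod_(i in J) p i)).
  move=> p Hw Hint Hst; rewrite Pr_dirac.
  have Hb := binary_indicator (stopped_binary Hw Hint Hst).
  case HJ: (J \subset _); last by apply: prodr_ge0 => k _; case/andP: (Hw k).
  by rewrite big1 // => k Hk; rewrite Hb (subsetP HJ k Hk).
move=> p i j q a1 b1 a2 b2 D1 D2 Hw _ [Hij _] Hspec _ _ IH1 IH2.
have /andP [Hq0 Hq1] := aggregate_prob Hspec.
rewrite Pr_mix; apply: le_trans (prod_upd_mix_le (g := id) J Hij (aggregate_prob Hspec) _
  (aggregate_mean1 Hspec) (aggregate_mean2 Hspec) (aggregate_joint_in Hspec)).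
  by apply: lerD; apply: ler_wpM2l => //; lra.
by move=> k; case/andP: (Hw k).
Qed.

Lemma outcome_joint_out p D : outcome T p D -> unit_weights p -> integral_total p ->
  forall J : {set 'I_n}, Pr D (fun S => [disjoint J & S]) <= \prod_(i in J) (1 - p i).
Proof.
move=> HD Hw Hint J; move: p D HD Hw Hint.
apply: (outcome_admissible_ind
  (P := fun p D => Pr D (fun S => [disjoint J & S]) <= \prod_(i in J) (1 - p i))).
  move=> p Hw Hint Hst; rewrite Pr_dirac.
  have Hb := binary_indicator (stopped_binary Hw Hint Hst).
  case HJ: [disjoint J & _]; last by apply: prodr_ge0 => k _; case/andP: (Hw k); lra.
  by rewrite big1 // => k Hk; rewrite Hb (disjointFr HJ Hk) subr0.
move=> p i j q a1 b1 a2 b2 D1 D2 Hw _ [Hij _] Hspec _ _ IH1 IH2.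
have /andP [Hq0 Hq1] := aggregate_prob Hspec.
have M1 := aggregate_mean1 Hspec; have M2 := aggregate_mean2 Hspec.
rewrite Pr_mix; apply: le_trans (prod_upd_mix_le (g := fun x => 1 - x) J Hij
  (aggregate_prob Hspec) _ _ _ (aggregate_joint_out Hspec)).
- by apply: lerD; apply: ler_wpM2l => //; lra.
- by move=> k; case/andP: (Hw k); lra.
- by lra.
- by lra.
Qed.

Lemma lowest_pair_straddle p i j v : lowest_pair T p i j -> descendant v T ->
  i \in leaves v -> j \notin leaves v ->
  forall a b, a != b -> a \in leaves v -> b \in leaves v ->
  fractional p a -> fractional p b -> False.
Proof.
move=> [_ [_ [_ [u [[HuT [Hiu [Hju _]]] Hmin]]]]] HvT Hiv Hjv a b Hab Hav Hbv Ha Hb.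
have Huniq := keyed_tree_uniq keyedT.
have [w Hw] := is_lca_exists (keyed_tree_mem a keyedT) (keyed_tree_mem b keyedT).
have Hwv := is_lca_descendant Huniq Hw HvT Hav Hbv.
have [Huv|Hvu] := descendant_total Huniq HuT HvT Hiu Hiv.
  by move: Hjv; rewrite (descendant_leaves Huv Hju).
apply: (Hmin a b w Hab Ha Hb Hw); split; first exact: descendant_trans Hwv Hvu.
by move=> Ewu; move: Hjv; rewrite -Ewu in Hju; rewrite (descendant_leaves Hwv Hju).
Qed.

Lemma range_invariant_straddle p i j (a b : R) v x : descendant v T ->
  lowest_pair T p i j -> unit_weights p -> 0 <= a <= 1 ->
  i \in range_of v -> j \notin range_of v ->
  range_invariant (range_of v) x p -> rounding_bounds (range_of v) x (upd p i j a b).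
Proof.
move=> HvT Hl Hw Ha Hi Hj Hinv.
have [Hij [Hfi _]] := Hl.
have Hrest k : k \in range_of v -> k != i -> upd p i j a b k = p k.
  by move=> Hk Hki; rewrite upd_other //; apply: contraTneq Hk => ->.
apply: (rounding_bounds_update Hi Hfi Hrest); first by rewrite upd_l.
case: Hinv => [<-|//]; apply: (rounding_bounds_single Hw Hi Hfi) => a' b' Ha'b'.
rewrite !inE in Hi Hj *; exact: lowest_pair_straddle Hl HvT Hi Hj a' b' Ha'b'.
Qed.

Lemma range_invariant_upd p i j (a b : R) v x : descendant v T ->
  lowest_pair T p i j -> unit_weights p -> 0 <= a <= 1 -> 0 <= b <= 1 ->
  a + b = p i + p j ->
  range_invariant (range_of v) x p -> range_invariant (range_of v) x (upd p i j a b).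
Proof.
move=> HvT Hl Hw Ha Hb Hab Hinv.
have [Hij [Hfi [Hfj _]]] := Hl.
case Hi: (i \in range_of v); case Hj: (j \in range_of v).
- case: Hinv => [Hm|[Hcard _ _]].
    by left; rewrite /pmass sum_upd // Hi Hj -/(pmass p _) Hm; lra.
  suff : (1 < count_fractional (range_of v) p)%N by rewrite ltnNge Hcard.
  by apply/card_gt1P; exists i, j; split=> //; rewrite in_set ?Hi ?Hj.
- by right; apply: range_invariant_straddle HvT Hl Hw Ha _ _ Hinv; rewrite ?Hi ?Hj.
- apply: (range_invariant_eq_on (p := upd p j i b a)) => [k _|]; first exact: upd_swap.
  by right; apply: range_invariant_straddle HvT (lowest_pair_sym Hl) Hw Hb _ _ Hinv; rewrite ?Hi ?Hj.
- apply: range_invariant_eq_on Hinv => k Hk; rewrite upd_other //.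
    by apply: contraTneq Hk => ->; rewrite Hi.
  by apply: contraTneq Hk => ->; rewrite Hj.
Qed.

Lemma outcome_range p D v : descendant v T -> outcome T p D ->
  unit_weights p -> integral_total p -> forall S, 0 < D S ->
  let k := #|S :&: range_of v|%:Z in
  k = Num.floor (pmass p (range_of v)) \/ k = Num.ceil (pmass p (range_of v)).
Proof.
move=> HvT HD Hw Hint; set x := pmass p (range_of v).
apply: (outcome_support (I := range_invariant (range_of v) x)
  (Q := fun S => #|S :&: range_of v|%:Z = Num.floor x \/ #|S :&: range_of v|%:Z = Num.ceil x))
  HD Hw Hint _ => [q i j qq a1 b1 a2 b2 Hwq Hl Hspec Hinv|q Hwq Hintq Hst Hinv|]; last by left.
  split; apply: (range_invariant_upd HvT Hl Hwq) Hinv.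
  - exact: aggregate_a1 Hspec.
  - exact: aggregate_b1 Hspec.
  - exact: aggregate_mass1 Hspec.
  - exact: aggregate_a2 Hspec.
  - exact: aggregate_b2 Hspec.
  - exact: aggregate_mass2 Hspec.
have Hb := stopped_binary Hwq Hintq Hst.
have -> : [set i | q i == 1] :&: range_of v = [set k in range_of v | q k == 1].
  by apply/setP => k; rewrite !inE andbC.
rewrite -/(count_ones (range_of v) q).
case: Hinv => [Hm|[_ Hfloor Hceil]].
  left; apply/esym/floor_def; rewrite -Hm pmass_binary => [|k _]; last exact: Hb.
  by rewrite /= intrD /=; apply/andP; split; lra.
have : Num.ceil x <= Num.floor x + 1 by rewrite ceil_floor lerD2l lez_nat leq_b1.
lia.
Qed.

End Procedure.

Lemma bigmax0_lt (R : realDomainType) (I : Type) (r : seq I) (P : pred I) (F : I -> R) (c : R) :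
  0 < c -> (forall i, List.In i r -> P i -> F i < c) -> \big[Num.max/0]_(i <- r | P i) F i < c.
Proof.
move=> c0; elim: r => [|a r IH] HF; first by rewrite big_nil.
have HFr : forall i, List.In i r -> P i -> F i < c by move=> i Hi; apply: HF; right.
rewrite big_cons; case: ifP => Pa; last exact: IH.
by rewrite gt_max HF ?IH //; left.
Qed.

Lemma floor_ceil_dist_lt1 (R : archiRealFieldType) (x : R) (k : int) :
  k = Num.floor x \/ k = Num.ceil x -> `|k%:~R - x| < 1.
Proof.
rewrite ltr_norml; case=> ->.
  by have := floor_le x; have := floorD1_gt x; rewrite intrD /=; lra.
by have := ceil_ge x; have := ceilB1_lt x; rewrite intrD /=; lra.
Qed.

Theorem mainTheorem2 (R : realType) (n : nat) (T : tree n) (p : 'I_n -> R) :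
  keyed_tree T ->
  (forall i, 0 <= p i <= 1) ->
  (exists m : int, \sum_i p i = m%:~R) ->
  (exists D, outcome T p D) /\
  (forall D, outcome T p D ->
     VarOpt p D /\
     (forall v, descendant v T -> forall S, 0 < D S ->
        let k := (#|S :&: range_of v|%:Z) in
        k = Num.floor (pmass p (range_of v)) \/ k = Num.ceil (pmass p (range_of v))) /\
     max_range_discrepancy T p D < 1).
Proof.
move=> HT Hw Hint; split=> [|D HD]; first exact: outcome_exists.
have Hrange v (HvT : descendant v T) := outcome_range HT HvT HD Hw Hint.
split; [|split=> //].
- split; first exact: outcome_distribution HD.
  split; first exact: outcome_marginal HD Hw Hint.
  split; first exact: outcome_card HD Hw Hint.
  split; first exact: outcome_joint_in HD Hw Hint.
  exact: outcome_joint_out HD Hw Hint.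
- apply: bigmax0_lt => // S _ HS; apply: bigmax0_lt => // v Hv _.
  exact: floor_ceil_dist_lt1 (Hrange v Hv S HS).
Qed.
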